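(* Let $n\ge2$, $X=\{1,\dots,n\}$, and let $\Sigma$ be the set of collections $\tau=\{J_1,\dots,J_{n-1}\}$ of subsets of $X$ with $|J_i|=i$ for each $i$. For $\tau\in\Sigma$ let $v_\tau=(a_1,\dots,a_n)^T\in\mathbb R^n$ where $a_j$ is the number of $i$ with $j\in J_i$. Then the convex hull of $\{v_\tau:\tau\in\Sigma\}$ is the $(n-1)$-permutohedron with parameters $m_1,\dots,m_n=0,1,\dots,n-1$, i.e. the convex hull of all coordinate permutations of $(0,1,\dots,n-1)$. *)

From HB Require Import structures.
From mathcomp Require Import all_boot all_order all_algebra all_fingroup.
From mathcomp Require Import reals.
Set Implicit Arguments. Unset Strict Implicit. Unset Printing Implicit Defensive.
Import Order.TTheory GRing.Theory Num.Theory.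
Local Open Scope ring_scope.

Definition in_conv_hull (R : realType) (n : nat) (I : finType) (P : pred I)
  (f : I -> 'rV[R]_n) (x : 'rV[R]_n) : Prop :=
  exists w : I -> R,
    [/\ forall i, 0 <= w i, \sum_(i | P i) w i = 1
      & x = \sum_(i | P i) w i *: f i].

(* tau = (J_1, ..., J_{n-1}) encoded as J : 'I_(n-1) -> {set 'I_n},
   with index i : 'I_(n-1) standing for J_{i+1}. *)
Definition in_Sigma (n : nat) (J : {ffun 'I_(n.-1) -> {set 'I_n}}) : bool :=
  [forall i : 'I_(n.-1), #|J i| == i.+1].

Definition v_tau (R : realType) (n : nat) (J : {ffun 'I_(n.-1) -> {set 'I_n}})
  : 'rV[R]_n :=
  \row_(j < n) (#|[set i : 'I_(n.-1) | j \in J i]|)%:R.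

Definition perm_pt (R : realType) (n : nat) (s : {perm 'I_n}) : 'rV[R]_n :=
  \row_(j < n) (nat_of_ord (s j))%:R.

From HB Require Import structures.
From mathcomp Require Import all_boot all_order all_algebra all_fingroup.
From mathcomp Require Import reals.
From mathcomp Require Import zify ring lra.
Set Implicit Arguments. Unset Strict Implicit. Unset Printing Implicit Defensive.
Import Order.TTheory GRing.Theory Num.Theory.
Local Open Scope ring_scope.

(* Every permutation point is some v_tau: take J_i to be the positions of the
   i largest values.  Conversely, if some J_k contains j but not j' although
   a_j <= a_j', exchanging j for j' in J_k gives tau' with a' = a - e_j + e_j',
   and v_tau is a convex combination of v_tau' and v_tau' with coordinates j, j'
   swapped.  The sum of the squares of the a_j strictly increases, so this
   process stops, at a tau whose sets are upward closed for the order given by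
   a; then the a_j are pairwise distinct, so v_tau is a permutation point. *)

Section ConvexHull.

Variables (R : realType) (n : nat) (I : finType) (P : pred I) (f : I -> 'rV[R]_n).

Lemma mem_conv_hull i : P i -> in_conv_hull P f (f i).
Proof.
move=> Pi; exists (fun k => (k == i)%:R); split.
- by move=> k; rewrite ler0n.
- by rewrite (bigD1 i) //= eqxx big1 ?addr0 // => k /andP[_ /negbTE ->].
- rewrite (bigD1 i) //= eqxx scale1r big1 ?addr0 //.
  by move=> k /andP[_ /negbTE ->]; rewrite scale0r.
Qed.

Lemma conv_hull_comb (K : finType) (Q : pred K) (g : K -> 'rV[R]_n) (w : K -> R) :
  (forall k, Q k -> in_conv_hull P f (g k)) -> (forall k, 0 <= w k) ->
  \sum_(k | Q k) w k = 1 -> in_conv_hull P f (\sum_(k | Q k) w k *: g k).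
Proof.
move=> hg w_ge0 w_sum1.
have /fin_all_exists [u hu] : forall k, exists u : I -> R, Q k ->
    [/\ forall i, 0 <= u i, \sum_(i | P i) u i = 1
      & g k = \sum_(i | P i) u i *: f i].
  move=> k; have [/hg [u hu]|_] := boolP (Q k); first by exists u.
  by exists (fun=> 0).
exists (fun i => \sum_(k | Q k) w k * u k i); split.
- move=> i; apply: sumr_ge0 => k Qk; have [u_ge0 _ _] := hu k Qk.
  exact: mulr_ge0.
- rewrite exchange_big /= -w_sum1; apply: eq_bigr => k Qk.
  by have [_ u_sum1 _] := hu k Qk; rewrite -mulr_sumr u_sum1 mulr1.
- under [RHS]eq_bigr do rewrite scaler_suml.
  rewrite exchange_big /=; apply: eq_bigr => k Qk.
  have [_ _ ->] := hu k Qk; rewrite scaler_sumr; apply: eq_bigr => i _.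
  by rewrite scalerA.
Qed.

Lemma conv_hull_sub (K : finType) (Q : pred K) (g : K -> 'rV[R]_n) x :
  (forall k, Q k -> in_conv_hull P f (g k)) ->
  in_conv_hull Q g x -> in_conv_hull P f x.
Proof. by move=> hg [w [w_ge0 w_sum1 ->]]; exact: conv_hull_comb. Qed.

End ConvexHull.

Section Permutohedron.

Variables (R : realType) (n : nat).

Definition permutohedron (x : 'rV[R]_n) : Prop :=
  in_conv_hull (fun _ : {perm 'I_n} => true) (@perm_pt R n) x.

Lemma permutohedron_perm_pt s : permutohedron (perm_pt R s).
Proof. exact: mem_conv_hull. Qed.

Lemma permutohedron_permute (p : {perm 'I_n}) x :
  permutohedron x -> permutohedron (\row_j x 0 (p j)).
Proof.
case=> w [w_ge0 w_sum1 ->]; exists (fun t => w (p^-1 * t)%g); split => //.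
  by rewrite (reindex_inj (mulgI p)) /= -w_sum1; apply: eq_bigr => s _; rewrite mulKg.
rewrite [RHS](reindex_inj (mulgI p)) /=; apply/rowP => j; rewrite !mxE !summxE.
by apply: eq_bigr => s _; rewrite mulKg !mxE permM.
Qed.

Lemma unit_exchange_convex (v v' : 'rV[R]_n) j j' (a b : R) :
  j != j' -> a <= b ->
  v 0 j = a + 1 -> v' 0 j = a -> v 0 j' = b -> v' 0 j' = b + 1 ->
  (forall c, c != j -> c != j' -> v 0 c = v' 0 c) ->
  v = (b - a) / (b - a + 1) *: v' + 1 / (b - a + 1) *: \row_c v' 0 (tperm j j' c).
Proof.
move=> neq_jj' le_ab vj v'j vj' v'j' v_other.
have q_neq0 : b - a + 1 != 0 by apply/eqP; lra.
apply/rowP => c; rewrite !mxE.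
have [->|c_neq_j] := eqVneq c j; first by rewrite tpermL vj v'j v'j'; field.
have [->|c_neq_j'] := eqVneq c j'; first by rewrite tpermR vj' v'j v'j'; field.
by rewrite tpermD 1?eq_sym // v_other //; field.
Qed.

Lemma permutohedron_unit_exchange (v v' : 'rV[R]_n) j j' (a b : R) :
  j != j' -> a <= b ->
  v 0 j = a + 1 -> v' 0 j = a -> v 0 j' = b -> v' 0 j' = b + 1 ->
  (forall c, c != j -> c != j' -> v 0 c = v' 0 c) ->
  permutohedron v' -> permutohedron v.
Proof.
move=> neq_jj' le_ab vj v'j vj' v'j' v_other hv'.
rewrite (unit_exchange_convex neq_jj' le_ab vj v'j vj' v'j' v_other).
have q_gt0 : 0 < b - a + 1 by lra.
have := @conv_hull_comb R n _ xpredT (@perm_pt R n) _ xpredT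
  (fun k : bool => if k then v' else \row_c v' 0 (tperm j j' c))
  (fun k : bool => if k then (b - a) / (b - a + 1) else 1 / (b - a + 1)).
rewrite !big_bool; apply.
- by case=> _ //; exact: permutohedron_permute.
- by case; apply: divr_ge0; lra.
- by rewrite /= -mulrDl divff ?gt_eqF.
Qed.

End Permutohedron.

Lemma card_ord_geq m c : #|[set y : 'I_m | (c <= y)%N]| = (m - c)%N.
Proof.
rewrite cardsE -sum1_card big_mkcond /=.
rewrite -(big_mkord xpredT (fun y => if (c <= y)%N then 1%N else 0%N)).
elim: m => [|m IHm]; first by rewrite big_geq.
by rewrite big_nat_recr //= IHm; case: leqP => ?; lia.
Qed.

Section Tau.

Variable n : nat.

Local Notation tau := {ffun 'I_n.-1 -> {set 'I_n}}.

Definition occ (J : tau) (j : 'I_n) : nat := #|[set i | j \in J i]|.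

Lemma v_tauE (R : realType) (J : tau) : v_tau R J = \row_j (occ J j)%:R.
Proof. by []. Qed.

Lemma occ_le (J : tau) j : (occ J j <= n.-1)%N.
Proof. by apply: leq_trans (max_card _) _; rewrite card_ord. Qed.

Definition occ_sqsum (J : tau) : nat := \sum_j occ J j ^ 2.

Lemma occ_sqsum_le (J : tau) : (occ_sqsum J <= n * n.-1 ^ 2)%N.
Proof.
rewrite -[n in (_ <= n * _)%N]card_ord -sum_nat_const.
by apply: leq_sum => j _; rewrite leq_exp2r ?occ_le.
Qed.

Lemma occ_sqsum_lt (J J' : tau) j j' :
  j != j' -> (occ J j <= occ J j')%N ->
  occ J j = (occ J' j).+1 -> occ J' j' = (occ J j').+1 ->
  (forall c, c != j -> c != j' -> occ J' c = occ J c) ->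
  (occ_sqsum J < occ_sqsum J')%N.
Proof.
move=> neq_jj' le_jj' occ_j occ_j' occ_other.
have split_sum K : occ_sqsum K =
    (occ K j ^ 2 + occ K j' ^ 2 + \sum_(c | (c != j) && (c != j')) occ K c ^ 2)%N.
  by rewrite /occ_sqsum (bigD1 j) //= (bigD1 j') 1?eq_sym //= addnA.
rewrite !split_sum.
under [X in (_ < _ + X)%N]eq_bigr => c /andP[c_j c_j'] do rewrite occ_other //.
rewrite ltn_add2r occ_j occ_j'; move: le_jj'; rewrite occ_j; nia.
Qed.

Definition exchange (J : tau) (k : 'I_n.-1) (j j' : 'I_n) : tau :=
  [ffun i => if i == k then j' |: (J k :\ j) else J i].

Section Exchange.

Variables (J : tau) (k : 'I_n.-1) (j j' : 'I_n).
Hypotheses (jJk : j \in J k) (j'Jk : j' \notin J k).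

Let neq_jj' : j != j'.
Proof. by apply: contraNneq j'Jk => <-. Qed.

Lemma in_Sigma_exchange : in_Sigma J -> in_Sigma (exchange J k j j').
Proof.
move=> /forallP cardJ; apply/forallP => i; rewrite ffunE.
have [->|_] := eqVneq i k; last exact: cardJ.
rewrite cardsU1 !inE (negbTE j'Jk) andbF /=.
by rewrite -(eqP (cardJ k)) (cardsD1 j (J k)) jJk.
Qed.

Lemma occ_exchange_out : occ J j = (occ (exchange J k j j') j).+1.
Proof.
rewrite /occ (cardsD1 k [set i | j \in J i]) inE jJk /=; congr S; apply: eq_card => i.
rewrite !inE ffunE; have [->|//] := eqVneq i k.
by rewrite !inE eqxx (negbTE neq_jj').
Qed.

Lemma occ_exchange_in : occ (exchange J k j j') j' = (occ J j').+1.
Proof.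
rewrite /occ; suff -> : [set i | j' \in exchange J k j j' i] = k |: [set i | j' \in J i].
  by rewrite cardsU1 inE j'Jk.
apply/setP => i; rewrite !inE ffunE; have [->|//] := eqVneq i k.
by rewrite !inE eqxx.
Qed.

Lemma occ_exchange_other c :
  c != j -> c != j' -> occ (exchange J k j j') c = occ J c.
Proof.
move=> c_j c_j'; apply: eq_card => i; rewrite !inE ffunE.
by have [->|_] := eqVneq i k; rewrite // !inE (negbTE c_j) (negbTE c_j').
Qed.

End Exchange.

Definition upward_closed (J : tau) : Prop :=
  forall j j' k, (occ J j <= occ J j')%N -> j \in J k -> j' \in J k.

(* Two coordinates with the same value t would both lie in the set J_k of size
   one more than the number of coordinates above t. *)
Lemma occ_inj (J : tau) : in_Sigma J -> upward_closed J -> injective (occ J).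
Proof.
move=> /forallP cardJ closedJ j j' eq_occ; apply/eqP/negPn/negP => neq_jj'.
pose U := [set x | (occ J j < occ J x)%N].
have jU : j \notin U by rewrite inE ltnn.
have j'U : j' \notin U by rewrite inE -eq_occ ltnn.
have U_small : (#|U| < n.-1)%N.
  have : (#|U| <= #|~: [set j; j']|)%N.
    apply/subset_leq_card/subsetP => y yU; rewrite !inE.
    by apply/negP => /orP[]/eqP ey; move: yU; rewrite ey ?(negbTE jU) ?(negbTE j'U).
  by have := cardsC [set j; j']; rewrite cards2 neq_jj' card_ord /=; lia.
pose k := Ordinal U_small.
have /eqP cardJk := cardJ k.
have [x xJk xU] : exists2 x, x \in J k & x \notin U.
  by apply/subsetPn/negP => /subset_leq_card; rewrite cardJk ltnn.
have occ_x : (occ J x <= occ J j)%N by move: xU; rewrite inE -leqNgt.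
have : j |: (j' |: U) \subset J k.
  apply/subsetP => y; rewrite !inE => /orP[/eqP->|/orP[/eqP->|yU]].
  - exact: closedJ occ_x xJk.
  - by apply: closedJ xJk; rewrite -eq_occ.
  - by apply: closedJ xJk; apply: ltnW (leq_ltn_trans occ_x yU).
move/subset_leq_card; rewrite cardJk !cardsU1 (negbTE j'U) !inE negb_or neq_jj'.
by rewrite ltnn /= !add1n ltnn.
Qed.

Lemma v_tau_upward_closed (R : realType) (J : tau) :
  in_Sigma J -> upward_closed J -> exists s, v_tau R J = perm_pt R s.
Proof.
move=> sigmaJ closedJ.
have occ_lt j : (occ J j < n)%N by have := occ_le J j; have := ltn_ord j; lia.
have inj_occ : injective (fun j => Ordinal (occ_lt j)).
  by move=> j j' /(congr1 val) /(occ_inj sigmaJ closedJ).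
by exists (perm inj_occ); apply/rowP => j; rewrite !mxE permE.
Qed.

Lemma v_tau_in_permutohedron (R : realType) (J : tau) :
  in_Sigma J -> permutohedron (v_tau R J).
Proof.
move Ed : (n * n.-1 ^ 2 - occ_sqsum J)%N => d.
elim/ltn_ind: d J Ed => d IHd J Ed sigmaJ.
have [|closedJ] := boolP [exists j, exists j', exists k,
    [&& occ J j <= occ J j', j \in J k & j' \notin J k]%N]; last first.
  have [|s ->] := @v_tau_upward_closed R J sigmaJ; last exact: permutohedron_perm_pt.
  move=> j j' k le_jj' jJk; apply: contraNT closedJ => j'Jk.
  by apply/existsP; exists j; apply/existsP; exists j'; apply/existsP; exists k;
    rewrite le_jj' jJk.
case/existsP => j /existsP[j' /existsP[k /and3P[le_jj' jJk j'Jk]]].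
have neq_jj' : j != j' by apply: contraNneq j'Jk => <-.
have occ_j := occ_exchange_out jJk j'Jk.
have occ_j' := occ_exchange_in j j'Jk.
have occ_other := occ_exchange_other (j := j) (j' := j') J k.
set J' := exchange J k j j' in occ_j occ_j' occ_other.
apply: (@permutohedron_unit_exchange R n _ (v_tau R J') j j'
          (occ J' j)%:R (occ J j')%:R neq_jj').
- by rewrite ler_nat; apply: ltnW; rewrite -occ_j.
- by rewrite v_tauE mxE occ_j natr1.
- by rewrite v_tauE mxE.
- by rewrite v_tauE mxE.
- by rewrite v_tauE mxE occ_j' natr1.
- by move=> c c_j c_j'; rewrite !v_tauE !mxE occ_other.
apply: (IHd _ _ J' erefl (in_Sigma_exchange jJk j'Jk sigmaJ)).
have := occ_sqsum_lt neq_jj' le_jj' occ_j occ_j' occ_other.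
have := occ_sqsum_le J'; lia.
Qed.

Definition top_sets (s : {perm 'I_n}) : tau :=
  [ffun i : 'I_n.-1 => [set j | (n.-1 - i <= s j)%N]].

Lemma in_Sigma_top_sets s : in_Sigma (top_sets s).
Proof.
apply/forallP => i; rewrite ffunE.
have -> : [set j | (n.-1 - i <= s j)%N] = s @^-1: [set y : 'I_n | (n.-1 - i <= y)%N].
  by apply/setP => j; rewrite !inE.
rewrite card_preimset ?card_ord_geq; last exact: perm_inj.
by apply/eqP; have := ltn_ord i; lia.
Qed.

Lemma v_tau_top_sets (R : realType) s : v_tau R (top_sets s) = perm_pt R s.
Proof.
apply/rowP => j; rewrite v_tauE !mxE /occ; congr _%:R.
have -> : [set i | j \in top_sets s i] = [set i : 'I_n.-1 | (n.-1 - s j <= i)%N].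
  apply/setP => i; rewrite !inE ffunE inE.
  by have := ltn_ord i; have := ltn_ord (s j); move=> *; apply/idP/idP; lia.
by rewrite card_ord_geq; have := ltn_ord (s j); lia.
Qed.

End Tau.

Theorem proposition9 (R : realType) (n : nat) (hn : (2 <= n)%N) (x : 'rV[R]_n) :
  in_conv_hull (@in_Sigma n) (@v_tau R n) x <->
  in_conv_hull (fun _ : {perm 'I_n} => true) (@perm_pt R n) x.
Proof.
split; apply: conv_hull_sub.
- by move=> J sigmaJ; exact: v_tau_in_permutohedron.
- move=> s _; rewrite -v_tau_top_sets.
  exact/mem_conv_hull/in_Sigma_top_sets.
Qed.
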